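(* Let $X \subseteq \mathbb{Z}^{\omega}$ be closed under tail-equivalence. Then $X$ is homogeneous in $\mathbb{Z}^{\omega}$: for every open interval $I$ of $\mathbb{Z}^{\omega}$ we have $X \cong X\cap I$ (order-isomorphism). In particular, $X \cong X \cap I_r$ for every nonempty finite integer sequence $r$, where $I_r$ is the set of elements of $\mathbb{Z}^{\omega}$ beginning with $r$.
   Context: $\mathbb{Z}^{\omega}$ is the set of integer sequences with the lexicographic order ($u<v$ iff $u_n<v_n$ at the least $n$ with $u_n\ne v_n$). For a finite nonempty integer sequence $r$ and a sequence $u$, $ru$ is concatenation. $u,v\in\mathbb{Z}^{\omega}$ are tail-equivalent if $u=ru'$ and $v=su'$ for some finite sequences $r,s$ (possibly of different lengths) and some $u'\in\mathbb{Z}^{\omega}$; $X$ is closed under tail-equivalence if it is a union of tail-equivalence classes. An open interval of a linear order is a nonempty convex subset with neither a greatest nor a least element (its endpoints, if any, may be gaps of $\mathbb{Z}^{\omega}$). *)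

From Stdlib Require Import ZArith List Arith.
Import ListNotations.
Open Scope Z_scope.

Definition Zomega := nat -> Z.

Definition lex_lt (u v : Zomega) : Prop :=
  exists n : nat, (forall m : nat, (m < n)%nat -> u m = v m) /\ u n < v n.

Definition prepend (r : list Z) (u : Zomega) : Zomega :=
  fun n => if Nat.ltb n (length r) then nth n r 0 else u (n - length r)%nat.

Definition tail_equiv (u v : Zomega) : Prop :=
  exists (r s : list Z) (u' : Zomega), u = prepend r u' /\ v = prepend s u'.

Definition tail_closed (X : Zomega -> Prop) : Prop :=
  forall u v, tail_equiv u v -> X u -> X v.

Definition open_interval (I : Zomega -> Prop) : Prop :=
  (exists u, I u) /\
  (forall a b c, I a -> I c -> lex_lt a b -> lex_lt b c -> I b) /\
  (forall a, I a -> exists b, I b /\ lex_lt a b) /\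
  (forall a, I a -> exists b, I b /\ lex_lt b a).

(** A and B (subsets of Z^omega with the lexicographic order) are
    order-isomorphic: some map sends A onto B and preserves and reflects the
    order (hence is injective on A, since lex_lt is a strict total order). *)
Definition order_iso (A B : Zomega -> Prop) : Prop :=
  exists f : Zomega -> Zomega,
    (forall x, A x -> B (f x)) /\
    (forall y, B y -> exists x, A x /\ f x = y) /\
    (forall x y, A x -> A y -> (lex_lt x y <-> lex_lt (f x) (f y))).

Definition cone (r : list Z) : Zomega -> Prop :=
  fun u => exists u', u = prepend r u'.

From Stdlib Require Import ZArith List Lia Classical ClassicalEpsilon FunctionalExtensionality.
Open Scope Z_scope.

(** Call an order-isomorphism between subsets of Z^omega
    _tail-preserving_ if it maps every sequence to a tail-equivalent one.  Such
    a map [f : Z^omega -> B] restricts to an isomorphism [X -> X /\ B] whenever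
    [X] is closed under tail-equivalence, so it suffices to show that every cone
    [I_r] and every open interval is the image of all of Z^omega under a
    tail-preserving isomorphism.
    - Tail-preserving isomorphism is an equivalence relation, is invariant under
      the order reversal [u |-> -u], and can be glued along countable families
      of pieces placed in descending order.
    - Grafting a fixed prefix is such an isomorphism onto a cylinder; a small
      trick also gives [Z^omega ~ {u | a <= u 0}].
    - A nonempty final segment [J] without minimum splits into the "layers"
      [{u in J | depth of u in J is d + 1}]; each nonempty layer is of the form
      [{u | u agrees with x below d, m <= u d}], hence [~ Z^omega], and the
      layers descend, so [J ~ Z^omega].  Initial segments follow by reversal.
    - An open interval is cut at one of its points [z]; the part above [z] is an
      initial segment without maximum of the final segment [{u | z < u}], and
      the part below [z] is handled by reversal. *)

Notation full := (fun _ : Zomega => True).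

Lemma ex_least (P : nat -> Prop) :
  (exists n, P n) -> exists n, P n /\ forall m, (m < n)%nat -> ~ P m.
Proof.
  intros [n Hn].
  induction n as [n IH] using (well_founded_induction lt_wf).
  destruct (classic (exists m, (m < n)%nat /\ P m)) as [[m [Hmn Hm]]|Hnone].
  - exact (IH m Hmn Hm).
  - exists n; split; auto. intros m Hmn Hm; apply Hnone; eauto.
Qed.

Lemma lex_irrefl x : ~ lex_lt x x.
Proof. intros [n [_ H]]; lia. Qed.

Lemma lex_trans x y z : lex_lt x y -> lex_lt y z -> lex_lt x z.
Proof.
  intros [n [Hn Hxy]] [m [Hm Hyz]].
  exists (Nat.min n m); split.
  - intros i Hi; rewrite Hn, Hm by lia; reflexivity.
  - destruct (Nat.lt_total n m) as [H|[H|H]].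
    + rewrite Nat.min_l by lia; rewrite <- (Hm n H); exact Hxy.
    + subst m; rewrite Nat.min_id; lia.
    + rewrite Nat.min_r by lia; rewrite (Hn m H); exact Hyz.
Qed.

Lemma lex_asym x y : lex_lt x y -> ~ lex_lt y x.
Proof. intros H1 H2; exact (lex_irrefl _ (lex_trans _ _ _ H1 H2)). Qed.

Lemma lex_total x y : x = y \/ lex_lt x y \/ lex_lt y x.
Proof.
  destruct (classic (forall n, x n = y n)) as [Heq|Hdiff].
  - left; apply functional_extensionality; exact Heq.
  - apply not_all_ex_not in Hdiff.
    destruct (ex_least _ Hdiff) as [n [Hn Hmin]].
    assert (Hagree : forall m, (m < n)%nat -> x m = y m)
      by (intros m Hm; apply NNPP, Hmin, Hm).
    right; destruct (Z.lt_total (x n) (y n)) as [H|[H|H]].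
    + left; exists n; auto.
    + contradiction.
    + right; exists n; split; auto. intros m Hm; symmetry; auto.
Qed.

Lemma lex_lt_le_trans x y z : lex_lt x y -> ~ lex_lt z y -> lex_lt x z.
Proof.
  intros Hxy Hzy. destruct (lex_total z y) as [<-|[H|H]]; auto.
  - contradiction.
  - eapply lex_trans; eauto.
Qed.

Lemma lex_head x y : x 0%nat < y 0%nat -> lex_lt x y.
Proof. intros H; exists 0%nat; split; auto; intros; lia. Qed.

Definition shift_equiv (u v : Zomega) : Prop :=
  exists m n : nat, forall k, u (m + k)%nat = v (n + k)%nat.

Lemma shift_equiv_refl u : shift_equiv u u.
Proof. exists 0%nat, 0%nat; auto. Qed.

Lemma shift_equiv_sym u v : shift_equiv u v -> shift_equiv v u.
Proof. intros [m [n H]]; exists n, m; intros; symmetry; auto. Qed.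

Lemma shift_equiv_trans u v w :
  shift_equiv u v -> shift_equiv v w -> shift_equiv u w.
Proof.
  intros [m [n H]] [m' [n' H']]. exists (m + m')%nat, (n' + n)%nat. intros k.
  replace (m + m' + k)%nat with (m + (m' + k))%nat by lia. rewrite H.
  replace (n + (m' + k))%nat with (m' + (n + k))%nat by lia. rewrite H'.
  f_equal; lia.
Qed.

Lemma shift_equiv_tail_equiv u v : shift_equiv u v -> tail_equiv u v.
Proof.
  intros [m [n H]].
  exists (map u (seq 0 m)), (map v (seq 0 n)), (fun k => u (m + k)%nat).
  split; apply functional_extensionality; intros i; unfold prepend;
    rewrite length_map, length_seq.
  - destruct (Nat.ltb_spec i m).
    + rewrite (nth_indep _ 0 (u 0%nat)) by (rewrite length_map, length_seq; lia).
      rewrite map_nth, seq_nth by lia. reflexivity.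
    + f_equal; lia.
  - destruct (Nat.ltb_spec i n).
    + rewrite (nth_indep _ 0 (v 0%nat)) by (rewrite length_map, length_seq; lia).
      rewrite map_nth, seq_nth by lia. reflexivity.
    + rewrite H. f_equal; lia.
Qed.

Record tail_iso_by (f : Zomega -> Zomega) (A B : Zomega -> Prop) : Prop := {
  maps_into : forall x, A x -> B (f x);
  maps_onto : forall y, B y -> exists x, A x /\ f x = y;
  keeps_order : forall x y, A x -> A y -> (lex_lt x y <-> lex_lt (f x) (f y));
  keeps_tail : forall x, A x -> shift_equiv x (f x) }.
Arguments maps_into {f A B}.
Arguments maps_onto {f A B}.
Arguments keeps_order {f A B}.
Arguments keeps_tail {f A B}.

Definition tail_iso (A B : Zomega -> Prop) : Prop := exists f, tail_iso_by f A B.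

Lemma tail_iso_refl A : tail_iso A A.
Proof.
  exists (fun u => u); constructor; eauto using shift_equiv_refl; tauto.
Qed.

Lemma tail_iso_empty A B :
  (forall u, ~ A u) -> (forall u, ~ B u) -> tail_iso A B.
Proof.
  intros HA HB; exists (fun u => u); constructor; intros x Hx; firstorder.
Qed.

Lemma tail_iso_ext A A' B B' :
  (forall u, A u <-> A' u) -> (forall u, B u <-> B' u) ->
  tail_iso A B -> tail_iso A' B'.
Proof.
  intros HA HB [f Hf]; exists f; constructor.
  - intros x Hx; apply HB, (maps_into Hf), HA, Hx.
  - intros y Hy; destruct (maps_onto Hf y (proj2 (HB y) Hy)) as [x [Hx <-]].
    exists x; split; auto; apply HA; auto.
  - intros x y Hx Hy; apply (keeps_order Hf); apply HA; auto.
  - intros x Hx; apply (keeps_tail Hf), HA, Hx.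
Qed.

Lemma tail_iso_by_inj f A B x y :
  tail_iso_by f A B -> A x -> A y -> f x = f y -> x = y.
Proof.
  intros Hf Hx Hy Hfxy.
  destruct (lex_total x y) as [H|[H|H]]; auto; exfalso.
  - apply (keeps_order Hf x y Hx Hy) in H; rewrite Hfxy in H; exact (lex_irrefl _ H).
  - apply (keeps_order Hf y x Hy Hx) in H; rewrite Hfxy in H; exact (lex_irrefl _ H).
Qed.

Lemma tail_iso_trans A B C : tail_iso A B -> tail_iso B C -> tail_iso A C.
Proof.
  intros [f Hf] [g Hg]. exists (fun u => g (f u)); constructor.
  - intros x Hx; apply (maps_into Hg), (maps_into Hf), Hx.
  - intros z Hz. destruct (maps_onto Hg z Hz) as [y [Hy <-]].
    destruct (maps_onto Hf y Hy) as [x [Hx <-]]. eauto.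
  - intros x y Hx Hy. rewrite (keeps_order Hf x y Hx Hy).
    apply (keeps_order Hg); apply (maps_into Hf); auto.
  - intros x Hx. apply (shift_equiv_trans _ (f x)); [apply (keeps_tail Hf); auto|].
    apply (keeps_tail Hg), (maps_into Hf), Hx.
Qed.

Lemma tail_iso_sym A B : tail_iso A B -> tail_iso B A.
Proof.
  intros [f Hf].
  set (g := fun y => match excluded_middle_informative (exists x, A x /\ f x = y) with
                     | left h => proj1_sig (constructive_indefinite_description _ h)
                     | right _ => y end).
  assert (Hg : forall y, B y -> A (g y) /\ f (g y) = y).
  { intros y Hy. unfold g. destruct (excluded_middle_informative _) as [h|h].
    - destruct (constructive_indefinite_description _ h) as [x Hx]; exact Hx.
    - exfalso; apply h, (maps_onto Hf), Hy. }
  exists g; constructor.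
  - intros y Hy; apply Hg, Hy.
  - intros x Hx. exists (f x); split; [apply (maps_into Hf), Hx|].
    destruct (Hg (f x) (maps_into Hf x Hx)) as [Hgx Hfgx].
    exact (tail_iso_by_inj _ _ _ _ _ Hf Hgx Hx Hfgx).
  - intros x y Hx Hy. destruct (Hg x Hx) as [Agx Egx]; destruct (Hg y Hy) as [Agy Egy].
    rewrite (keeps_order Hf _ _ Agx Agy), Egx, Egy. reflexivity.
  - intros y Hy. destruct (Hg y Hy) as [Agy Egy]. apply shift_equiv_sym.
    rewrite <- Egy at 2. apply (keeps_tail Hf), Agy.
Qed.

Lemma tail_iso_glue (A B : nat -> Zomega -> Prop) :
  (forall d e x y, (d < e)%nat -> A d x -> A e y -> lex_lt y x) ->
  (forall d e x y, (d < e)%nat -> B d x -> B e y -> lex_lt y x) ->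
  (forall d, tail_iso (A d) (B d)) ->
  tail_iso (fun u => exists d, A d u) (fun u => exists d, B d u).
Proof.
  intros HA HB HAB.
  set (F := fun d => proj1_sig (constructive_indefinite_description _ (HAB d))).
  assert (HF : forall d, tail_iso_by (F d) (A d) (B d))
    by (intros d; exact (proj2_sig (constructive_indefinite_description _ (HAB d)))).
  assert (Hindex : forall d e u, A d u -> A e u -> d = e).
  { intros d e u Hd He. destruct (Nat.lt_total d e) as [h|[h|h]]; auto;
      exfalso; eapply lex_irrefl, HA; eauto. }
  set (f := fun u => match excluded_middle_informative (exists d, A d u) with
                     | left h => F (proj1_sig (constructive_indefinite_description _ h)) u
                     | right _ => u end).
  assert (Hf : forall d u, A d u -> f u = F d u).
  { intros d u Hu. unfold f. destruct (excluded_middle_informative _) as [h|h].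
    - destruct (constructive_indefinite_description _ h) as [d' Hd']; simpl.
      rewrite (Hindex _ _ _ Hd' Hu); reflexivity.
    - exfalso; eauto. }
  exists f; constructor.
  - intros x [d Hd]; exists d; rewrite (Hf _ _ Hd); apply (maps_into (HF d)), Hd.
  - intros y [d Hd]. destruct (maps_onto (HF d) y Hd) as [x [Hx <-]].
    exists x; split; [exists d; exact Hx|apply Hf, Hx].
  - intros x y [d Hd] [e He]. rewrite (Hf _ _ Hd), (Hf _ _ He).
    pose proof (maps_into (HF d) x Hd) as Bd; pose proof (maps_into (HF e) y He) as Be.
    destruct (Nat.lt_total d e) as [h|[<-|h]].
    + split; intros Hl; exfalso; eapply lex_asym; eauto.
    + apply (keeps_order (HF d)); auto.
    + split; intros _; eauto.
  - intros x [d Hd]. rewrite (Hf _ _ Hd). apply (keeps_tail (HF d)), Hd.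
Qed.

Lemma tail_iso_union A1 A2 B1 B2 :
  (forall x y, A1 x -> A2 y -> lex_lt x y) ->
  (forall x y, B1 x -> B2 y -> lex_lt x y) ->
  tail_iso A1 B1 -> tail_iso A2 B2 ->
  tail_iso (fun u => A1 u \/ A2 u) (fun u => B1 u \/ B2 u).
Proof.
  intros HA HB H1 H2.
  set (pieces := fun (P1 P2 : Zomega -> Prop) d u =>
                   match d with 0%nat => P2 u | 1%nat => P1 u | _ => False end).
  assert (Hunion : forall P1 P2 u, (exists d, pieces P1 P2 d u) <-> P1 u \/ P2 u).
  { intros P1 P2 u; split.
    - intros [[|[|d]] Hd]; simpl in Hd; tauto.
    - intros [Hu|Hu]; [exists 1%nat|exists 0%nat]; exact Hu. }
  eapply tail_iso_ext; [apply Hunion|apply Hunion|apply tail_iso_glue].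
  - intros [|[|d]] [|[|e]] x y Hde Hx Hy; simpl in *; try lia; try tauto; auto.
  - intros [|[|d]] [|[|e]] x y Hde Hx Hy; simpl in *; try lia; try tauto; auto.
  - intros [|[|d]]; simpl; auto using tail_iso_refl.
Qed.

Definition neg (u : Zomega) : Zomega := fun n => - u n.

Lemma neg_neg u : neg (neg u) = u.
Proof. apply functional_extensionality; intros n; unfold neg; lia. Qed.

Lemma lex_neg x y : lex_lt (neg x) (neg y) <-> lex_lt y x.
Proof.
  unfold neg; split; intros [n [Hagree Hn]]; exists n; split; try lia;
    intros m Hm; specialize (Hagree m Hm); lia.
Qed.

Lemma tail_iso_neg A B :
  tail_iso A B -> tail_iso (fun u => A (neg u)) (fun u => B (neg u)).
Proof.
  intros [f Hf]. exists (fun u => neg (f (neg u))); constructor.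
  - intros x Hx; rewrite neg_neg; apply (maps_into Hf), Hx.
  - intros y Hy. destruct (maps_onto Hf _ Hy) as [x [Hx Hfx]].
    exists (neg x); rewrite !neg_neg, Hfx, neg_neg; auto.
  - intros x y Hx Hy. rewrite <- (lex_neg y x), (lex_neg (f (neg x))).
    apply (keeps_order Hf); auto.
  - intros x Hx. destruct (keeps_tail Hf _ Hx) as [m [n H]].
    exists m, n; intros k; specialize (H k); unfold neg in *; lia.
Qed.

Definition agree (x : Zomega) (d : nat) (u : Zomega) : Prop :=
  forall i, (i < d)%nat -> u i = x i.
Definition shift (d : nat) (u : Zomega) : Zomega := fun k => u (d + k)%nat.
Definition graft (x : Zomega) (d : nat) (v : Zomega) : Zomega :=
  fun n => if Nat.ltb n d then x n else v (n - d)%nat.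

Lemma graft_lex x d v v' : lex_lt (graft x d v) (graft x d v') <-> lex_lt v v'.
Proof.
  unfold graft; split.
  - intros [n [Hagree Hn]].
    destruct (Nat.ltb_spec n d); [lia|].
    exists (n - d)%nat; split; [|exact Hn].
    intros m Hm. specialize (Hagree (d + m)%nat ltac:(lia)).
    destruct (Nat.ltb_spec (d + m) d); [lia|].
    replace (d + m - d)%nat with m in Hagree by lia. exact Hagree.
  - intros [n [Hagree Hn]]. exists (d + n)%nat; split.
    + intros m Hm. destruct (Nat.ltb_spec m d); auto. apply Hagree; lia.
    + destruct (Nat.ltb_spec (d + n) d); [lia|].
      replace (d + n - d)%nat with n by lia. exact Hn.
Qed.

Lemma graft_agree x d v : agree x d (graft x d v).
Proof. intros i Hi; unfold graft; destruct (Nat.ltb_spec i d); [auto|lia]. Qed.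

Lemma shift_graft x d v : shift d (graft x d v) = v.
Proof.
  apply functional_extensionality; intros k; unfold shift, graft.
  destruct (Nat.ltb_spec (d + k) d); [lia|]. f_equal; lia.
Qed.

Lemma graft_shift x d u : agree x d u -> graft x d (shift d u) = u.
Proof.
  intros H; apply functional_extensionality; intros k; unfold shift, graft.
  destruct (Nat.ltb_spec k d); [symmetry; auto|]. f_equal; lia.
Qed.

Lemma tail_iso_graft x d B :
  tail_iso B (fun u => agree x d u /\ B (shift d u)).
Proof.
  exists (graft x d); constructor.
  - intros v Hv; split; [apply graft_agree|rewrite shift_graft; exact Hv].
  - intros y [Hagree Hy]; exists (shift d y); split; auto; apply graft_shift, Hagree.
  - intros u v _ _; symmetry; apply graft_lex.
  - intros v _. exists 0%nat, d; intros k; unfold graft.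
    destruct (Nat.ltb_spec (d + k) d); [lia|]. f_equal; lia.
Qed.

Lemma cone_iso r : tail_iso full (cone r).
Proof.
  eapply tail_iso_ext;
    [| |apply (tail_iso_graft (prepend r (fun _ => 0)) (length r) full)]; [tauto|].
  intros u; split.
  - intros [Hagree _]. exists (shift (length r) u).
    apply functional_extensionality; intros i; unfold prepend, shift.
    destruct (Nat.ltb_spec i (length r)).
    + rewrite Hagree by auto. unfold prepend. destruct (Nat.ltb_spec i (length r)); [auto|lia].
    + f_equal; lia.
  - intros [u' ->]; split; auto. intros i Hi. unfold prepend.
    destruct (Nat.ltb_spec i (length r)); [auto|lia].
Qed.

Definition cst (a : Z) : Zomega := fun _ => a.

Lemma head_eq_iso a : tail_iso full (fun u => u 0%nat = a).
Proof.
  eapply tail_iso_ext; [| |apply (tail_iso_graft (cst a) 1 full)]; [tauto|].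
  intros u; split.
  - intros [Hagree _]; apply (Hagree 0%nat); lia.
  - intros Hu; split; auto. intros i Hi; replace i with 0%nat by lia; exact Hu.
Qed.

(** [Z^omega ~ {u | a <= u 0}]: the sequences below the constant [a] are moved
    up by prefixing [a]; the others are fixed. *)
Lemma head_ge_iso a : tail_iso full (fun u => a <= u 0%nat).
Proof.
  set (c := cst a).
  set (f := fun u => if excluded_middle_informative (lex_lt u c) then graft c 1 u else u).
  assert (Hbelow : forall u, lex_lt u c -> u 0%nat <= a).
  { intros u [[|n] [Hagree Hn]]; unfold c, cst in *; [lia|rewrite (Hagree 0%nat); lia]. }
  assert (Habove : forall u, ~ lex_lt u c -> a <= u 0%nat)
    by (intros u Hu; apply Z.nlt_ge; intros H; apply Hu, lex_head, H).
  assert (Hfix : graft c 1 c = c)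
    by (apply functional_extensionality; intros n; unfold graft, c, cst;
        destruct (Nat.ltb _ _); auto).
  assert (Hprefixed : forall u, lex_lt u c -> lex_lt (graft c 1 u) c)
    by (intros u Hu; rewrite <- Hfix at 2; apply graft_lex, Hu).
  assert (Hhead : forall u, a <= f u 0%nat).
  { intros u; unfold f; destruct (excluded_middle_informative _); auto.
    unfold graft, c, cst; simpl; lia. }
  exists f; constructor; [intros u _; apply Hhead| | |].
  - intros y Hy. destruct (excluded_middle_informative (lex_lt y c)) as [Hyc|Hyc].
    + assert (Hagree : agree c 1 y).
      { intros i Hi; replace i with 0%nat by lia. pose proof (Hbelow _ Hyc).
        unfold c, cst; lia. }
      assert (Hlow : lex_lt (shift 1 y) c).
      { apply (proj1 (graft_lex c 1 _ _)). rewrite graft_shift by exact Hagree.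
        rewrite Hfix; exact Hyc. }
      exists (shift 1 y); split; auto.
      unfold f; destruct (excluded_middle_informative _); [|contradiction].
      apply graft_shift, Hagree.
    + exists y; split; auto. unfold f; destruct (excluded_middle_informative _); tauto.
  - intros x y _ _. unfold f.
    destruct (excluded_middle_informative (lex_lt x c)) as [Hx|Hx];
    destruct (excluded_middle_informative (lex_lt y c)) as [Hy|Hy].
    + symmetry; apply graft_lex.
    + split; intros _; eapply lex_lt_le_trans; eauto.
    + split; intros H; exfalso; apply (lex_asym _ _ H); eapply lex_lt_le_trans; eauto.
    + tauto.
  - intros x _; unfold f; destruct (excluded_middle_informative _);
      [|apply shift_equiv_refl].
    exists 0%nat, 1%nat; intros k; unfold graft; simpl.
    destruct (Nat.ltb_spec (S k) 1); [lia|]. f_equal; lia.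
Qed.

Lemma head_le_iso a : tail_iso full (fun u => u 0%nat <= a).
Proof.
  eapply tail_iso_ext; [| |exact (tail_iso_neg _ _ (head_ge_iso (- a)))];
    intros u; unfold neg; lia.
Qed.

Lemma agree_refl x d : agree x d x.
Proof. intros i Hi; reflexivity. Qed.

Lemma agree_sym x d u : agree x d u -> agree u d x.
Proof. intros H i Hi; symmetry; auto. Qed.

Lemma agree_trans x d u v : agree x d u -> agree u d v -> agree x d v.
Proof. intros H1 H2 i Hi; rewrite H2, H1; auto. Qed.

Lemma agree_le x d e u : (d <= e)%nat -> agree x e u -> agree x d u.
Proof. intros H1 H2 i Hi; apply H2; lia. Qed.

Lemma Z_upward_least (K : Z -> Prop) a b :
  (forall j j', K j -> j <= j' -> K j') -> K a -> ~ K b ->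
  exists m, forall j, K j <-> m <= j.
Proof.
  intros Kup Ka Kb.
  assert (Hba : b < a) by (apply Z.nle_gt; intros H; exact (Kb (Kup a b Ka H))).
  destruct (ex_least (fun n => K (b + Z.of_nat n))) as [n [Kn Hmin]].
  { exists (Z.to_nat (a - b)). replace (b + Z.of_nat (Z.to_nat (a - b))) with a by lia.
    exact Ka. }
  exists (b + Z.of_nat n); intros j; split; [intros Kj|intros Hj; exact (Kup _ _ Kn Hj)].
  apply Z.nlt_ge; intros Hj.
  destruct (Z.le_gt_cases j b) as [Hjb|Hjb]; [exact (Kb (Kup j b Kj Hjb))|].
  apply (Hmin (Z.to_nat (j - b))); [lia|].
  replace (b + Z.of_nat (Z.to_nat (j - b))) with j by lia. exact Kj.
Qed.

(** The matching pieces of [Z^omega] are the slices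
    [{u | u 0 = -1 - d}], except that the last nonempty piece (if any) gets the
    whole remainder [{u | u 0 <= -1 - d}]; all together they fill
    [{u | u 0 <= -1}]. *)
Lemma descending_union_iso (P : nat -> Zomega -> Prop) :
  (forall d, (exists u, P d u) -> tail_iso full (P d)) ->
  (forall d, (exists u, P (S d) u) -> exists u, P d u) ->
  (exists d u, P d u) ->
  (forall d e x y, (d < e)%nat -> P d x -> P e y -> lex_lt y x) ->
  tail_iso full (fun u => exists d, P d u).
Proof.
  intros Hiso Hdown [d0 Hd0] Hdesc.
  set (ne := fun d => exists u, P d u).
  assert (Hne_le : forall d e, (d <= e)%nat -> ne e -> ne d)
    by (intros d e Hde; induction Hde as [|e _ IH]; [auto|intros H; apply IH, Hdown, H]).
  set (Q := fun d (u : Zomega) =>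
              (ne (S d) /\ u 0%nat = -1 - Z.of_nat d) \/
              (~ ne (S d) /\ ne d /\ u 0%nat <= -1 - Z.of_nat d)).
  assert (HQP : forall d, tail_iso (Q d) (P d)).
  { intros d. destruct (classic (ne d)) as [Hd|Hd].
    - apply (tail_iso_trans _ full); [apply tail_iso_sym|apply Hiso, Hd].
      destruct (classic (ne (S d))) as [HSd|HSd].
      + eapply tail_iso_ext; [| |apply (head_eq_iso (-1 - Z.of_nat d))]; [tauto|].
        intros u; unfold Q; tauto.
      + eapply tail_iso_ext; [| |apply (head_le_iso (-1 - Z.of_nat d))]; [tauto|].
        intros u; unfold Q; tauto.
    - apply tail_iso_empty; [|intros u Hu; apply Hd; exists u; exact Hu].
      intros u [[HSd _]|[_ [Hd' _]]]; [apply Hd, Hdown, HSd|exact (Hd Hd')]. }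
  assert (Hcover : forall u, (exists d, Q d u) <-> u 0%nat <= -1).
  { intros u; split; [intros [d [[_ H]|[_ [_ H]]]]; lia|intros Hu].
    set (e := Z.to_nat (- u 0%nat - 1)).
    assert (He : u 0%nat = -1 - Z.of_nat e) by (unfold e; lia).
    destruct (classic (ne (S e))) as [HSe|HSe]; [exists e; left; auto|].
    destruct (ex_least (fun D => ~ ne (S D)) (ex_intro _ e HSe)) as [D [HD Hmin]].
    assert (HDe : (D <= e)%nat)
      by (apply Nat.nlt_ge; intros H; exact (Hmin e H HSe)).
    exists D; right; split; [exact HD|split; [|lia]].
    destruct D as [|D]; [apply (Hne_le 0%nat d0); [lia|exact Hd0]|].
    apply NNPP, Hmin; lia. }
  eapply tail_iso_trans; [apply (head_le_iso (-1))|].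
  apply (tail_iso_ext (fun u => exists d, Q d u) _ (fun u => exists d, P d u));
    [exact Hcover|tauto|apply tail_iso_glue; auto].
  intros d e x y Hde Hx Hy. apply lex_head.
  assert (Hne_e : ne e) by (destruct Hy as [[H _]|[_ [H _]]]; [apply Hdown, H|exact H]).
  destruct Hx as [[_ Hx]|[HSd _]]; [|exfalso; apply HSd, (Hne_le _ e); auto].
  destruct Hy as [[_ Hy]|[_ [_ Hy]]]; lia.
Qed.

(** Let [J] be a final segment.  The depth of [u] in [J] is the least [d] such
    that every sequence agreeing with [u] below [d] lies in [J]. *)
Section FinalSegment.

Variable J : Zomega -> Prop.
Hypothesis J_final : forall x y, J x -> lex_lt x y -> J y.
Hypothesis J_no_min : forall x, J x -> exists y, J y /\ lex_lt y x.

Definition cylinder_in (d : nat) (x : Zomega) : Prop := forall u, agree x d u -> J u.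

Definition layer (d : nat) (u : Zomega) : Prop :=
  J u /\ ~ cylinder_in d u /\ cylinder_in (S d) u.

Lemma cylinder_in_agree d x y : agree x d y -> cylinder_in d x -> cylinder_in d y.
Proof. intros Hxy Hx u Hu; apply Hx; eapply agree_trans; eauto. Qed.

Lemma cylinder_in_mono d e x : (d <= e)%nat -> cylinder_in d x -> cylinder_in e x.
Proof. intros Hde Hx u Hu; apply Hx; eapply agree_le; eauto. Qed.

Lemma cylinder_in_mem d x : cylinder_in d x -> J x.
Proof. intros Hx; apply Hx, agree_refl. Qed.

Lemma not_cylinder_in d x : ~ cylinder_in d x -> exists w, agree x d w /\ ~ J w.
Proof.
  intros Hx. apply NNPP; intros Hnone; apply Hx; intros u Hu.
  apply NNPP; intros Ju; apply Hnone; eauto.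
Qed.

Lemma below_outside_agree d u v :
  J u -> ~ cylinder_in d v -> lex_lt u v -> agree u d v.
Proof.
  intros Ju Hv [n [Hagree Hn]].
  destruct (Nat.lt_ge_cases n d) as [Hnd|Hdn].
  - exfalso; apply Hv; intros w Hw. apply (J_final u w Ju). exists n; split.
    + intros m Hm; rewrite Hw by lia; auto.
    + rewrite Hw by lia; exact Hn.
  - intros i Hi; symmetry; apply Hagree; lia.
Qed.

Lemma layer_agree d u v : layer d u -> layer d v -> agree u d v.
Proof.
  intros [Ju [Nu _]] [Jv [Nv _]].
  destruct (lex_total u v) as [<-|[H|H]].
  - apply agree_refl.
  - exact (below_outside_agree d u v Ju Nv H).
  - exact (agree_sym _ _ _ (below_outside_agree d v u Jv Nu H)).
Qed.

Lemma layer_descending d e u v : (d < e)%nat -> layer d u -> layer e v -> lex_lt v u.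
Proof.
  intros Hde [Ju [_ Cu]] [Jv [Nv _]].
  assert (Hfar : ~ agree u (S d) v)
    by (intros H; apply Nv, (cylinder_in_mono (S d)); [lia|eapply cylinder_in_agree; eauto]).
  destruct (lex_total u v) as [<-|[H|H]]; auto; exfalso; apply Hfar.
  - apply agree_refl.
  - apply (agree_le _ _ e); [lia|]. exact (below_outside_agree e u v Ju Nv H).
Qed.

Lemma layer_shape d x :
  layer d x -> exists m, forall u, layer d u <-> agree x d u /\ m <= u d.
Proof.
  intros Hx. pose proof Hx as [Jx [Nx Cx]].
  set (K := fun j => cylinder_in (S d) (graft x d (cst j))).
  assert (HK : forall u, agree x d u -> (cylinder_in (S d) u <-> K (u d))).
  { intros u Hu. assert (Hagree : agree u (S d) (graft x d (cst (u d)))).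
    { intros i Hi. unfold graft, cst. destruct (Nat.ltb_spec i d).
      - symmetry; auto.
      - f_equal; lia. }
    split; intros H; eapply cylinder_in_agree; eauto using agree_sym. }
  assert (Kup : forall j j', K j -> j <= j' -> K j').
  { intros j j' Kj Hjj'. destruct (Z.eq_dec j j') as [<-|Hne]; [exact Kj|].
    intros w Hw. apply (J_final _ w (cylinder_in_mem _ _ Kj)). exists d; split.
    - intros m Hm. rewrite Hw by lia. unfold graft. destruct (Nat.ltb_spec m d); auto; lia.
    - rewrite Hw by lia. unfold graft, cst. destruct (Nat.ltb_spec d d); lia. }
  destruct (not_cylinder_in _ _ Nx) as [w [Hw Jw]].
  assert (Kw : ~ K (w d))
    by (intros Kw; apply Jw, (cylinder_in_mem (S d)), (HK w Hw), Kw).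
  destruct (Z_upward_least K _ _ Kup (proj1 (HK x (agree_refl _ _)) Cx) Kw) as [m Hm].
  exists m; intros u; split.
  - intros Hu. pose proof (layer_agree d x u Hx Hu) as Hagree.
    split; [exact Hagree|apply Hm, (HK u Hagree), Hu].
  - intros [Hagree Hmu]. assert (Cu : cylinder_in (S d) u) by apply (HK u Hagree), Hm, Hmu.
    split; [exact (cylinder_in_mem _ _ Cu)|split; [|exact Cu]].
    intros H; apply Nx; eapply cylinder_in_agree; eauto using agree_sym.
Qed.

Lemma layer_iso d x : layer d x -> tail_iso full (layer d).
Proof.
  intros Hx. destruct (layer_shape d x Hx) as [m Hm].
  eapply tail_iso_trans; [apply (head_ge_iso m)|].
  eapply tail_iso_ext; [| |apply (tail_iso_graft x d (fun v => m <= v 0%nat))]; [tauto|].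
  intros u; rewrite Hm; unfold shift; rewrite Nat.add_0_r; tauto.
Qed.

(** Nonempty layers form an initial segment of the indices: raising the
    [d]-th term of an element of layer [S d] yields an element of layer [d]. *)
Lemma layer_down d : (exists u, layer (S d) u) -> exists v, layer d v.
Proof.
  intros [u [Ju [Nu _]]].
  set (v := graft u d (cst (u d + 1))).
  assert (Huv : agree u d v) by apply graft_agree.
  assert (Cv : cylinder_in (S d) v).
  { intros w Hw. apply (J_final u w Ju). exists d; split.
    - intros m Hm. rewrite Hw by lia. unfold v, graft. destruct (Nat.ltb_spec m d); auto; lia.
    - rewrite Hw by lia. unfold v, graft, cst. destruct (Nat.ltb_spec d d); lia. }
  exists v; split; [exact (cylinder_in_mem _ _ Cv)|split; [|exact Cv]].
  intros H. apply Nu, (cylinder_in_mono d); [lia|].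
  eapply cylinder_in_agree; eauto using agree_sym.
Qed.

(** If [J] is not everything, every element of [J] lies in some layer: its
    depth is positive and finite (finite because [J] has no minimum). *)
Lemma layer_cover u : (exists w, ~ J w) -> J u -> exists d, layer d u.
Proof.
  intros [w Jw] Ju. destruct (J_no_min u Ju) as [v [Jv [n [Hagree Hn]]]].
  assert (Hdepth : exists d, cylinder_in d u).
  { exists (S n). intros x Hx. apply (J_final v x Jv). exists n; split.
    - intros m Hm; rewrite Hx by lia; auto.
    - rewrite Hx by lia; exact Hn. }
  destruct (ex_least _ Hdepth) as [[|d] [Hd Hmin]].
  - exfalso; apply Jw, Hd; intros i Hi; lia.
  - exists d; split; [exact Ju|split; [apply Hmin; lia|exact Hd]].
Qed.

End FinalSegment.

Lemma final_segment_iso (J : Zomega -> Prop) :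
  (exists u, J u) -> (forall x y, J x -> lex_lt x y -> J y) ->
  (forall x, J x -> exists y, J y /\ lex_lt y x) -> tail_iso full J.
Proof.
  intros [u0 Ju0] Hfinal Hno_min.
  destruct (classic (exists w, ~ J w)) as [Hproper|Hall].
  2:{ apply (tail_iso_ext full full full J); [tauto| |apply tail_iso_refl].
      intros u; split; auto.
      intros _; apply NNPP; intros Ju; apply Hall; eauto. }
  eapply tail_iso_ext; [| |apply (descending_union_iso (layer J))]; [tauto| | | | |].
  - intros u; split; [intros [d [Ju _]]; exact Ju|].
    apply layer_cover; assumption.
  - intros d [x Hx]. exact (layer_iso J Hfinal d x Hx).
  - apply layer_down; assumption.
  - destruct (layer_cover J Hfinal Hno_min u0 Hproper Ju0) as [d Hd]; eauto.
  - apply layer_descending; assumption.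
Qed.

Lemma initial_segment_iso (K : Zomega -> Prop) :
  (exists u, K u) -> (forall x y, K y -> lex_lt x y -> K x) ->
  (forall x, K x -> exists y, K y /\ lex_lt x y) -> tail_iso full K.
Proof.
  intros [k Hk] Hinitial Hno_max.
  assert (Hmirror : tail_iso full (fun u => K (neg u))).
  { apply final_segment_iso.
    - exists (neg k); rewrite neg_neg; exact Hk.
    - intros x y Hx Hxy. apply (Hinitial _ (neg x) Hx), lex_neg, Hxy.
    - intros x Hx. destruct (Hno_max _ Hx) as [y [Hy Hxy]]. exists (neg y).
      rewrite neg_neg, <- (neg_neg x). split; [exact Hy|apply lex_neg, Hxy]. }
  eapply tail_iso_ext; [| |exact (tail_iso_neg _ _ Hmirror)]; [tauto|].
  intros u; cbv beta; rewrite neg_neg; tauto.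
Qed.

Lemma tail_iso_restrict f A B C :
  tail_iso_by f A B -> (forall y, C y -> B y) ->
  tail_iso (fun x => A x /\ C (f x)) C.
Proof.
  intros Hf HCB. exists f; constructor.
  - intros x [_ Hx]; exact Hx.
  - intros y Hy. destruct (maps_onto Hf y (HCB y Hy)) as [x [Hx <-]]; eauto.
  - intros x y [Hx _] [Hy _]; apply (keeps_order Hf); auto.
  - intros x [Hx _]; apply (keeps_tail Hf), Hx.
Qed.

Lemma initial_segment_iso_in (U K : Zomega -> Prop) :
  tail_iso full U -> (forall y, K y -> U y) ->
  (forall x y, K y -> U x -> lex_lt x y -> K x) -> (exists u, K u) ->
  (forall x, K x -> exists y, K y /\ lex_lt x y) -> tail_iso full K.
Proof.
  intros [f Hf] HKU Hinitial [k Hk] Hno_max.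
  eapply tail_iso_trans; [|apply (tail_iso_restrict f _ _ K Hf HKU)].
  eapply tail_iso_ext; [| |apply (initial_segment_iso (fun x => K (f x)))];
    [tauto|tauto| | |].
  - destruct (maps_onto Hf k (HKU k Hk)) as [x [_ <-]]; eauto.
  - intros x y Hy Hxy. apply (Hinitial (f x) (f y) Hy (maps_into Hf x I)).
    apply (keeps_order Hf x y I I), Hxy.
  - intros x Hx. destruct (Hno_max _ Hx) as [k' [Hk' Hxk']].
    destruct (maps_onto Hf k' (HKU _ Hk')) as [y [_ <-]]. exists y; split; auto.
    apply (keeps_order Hf x y I I), Hxk'.
Qed.

Lemma lex_dense a b : lex_lt a b -> exists c, lex_lt a c /\ lex_lt c b.
Proof.
  intros [n [Hagree Hn]].
  exists (graft a (S n) (cst (a (S n) + 1))); unfold graft, cst; split.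
  - exists (S n); split.
    + intros m Hm; destruct (Nat.ltb_spec m (S n)); [reflexivity|lia].
    + destruct (Nat.ltb_spec (S n) (S n)); lia.
  - exists n; split.
    + intros m Hm; destruct (Nat.ltb_spec m (S n)); [auto|lia].
    + destruct (Nat.ltb_spec n (S n)); [exact Hn|lia].
Qed.

Lemma open_interval_full : open_interval full.
Proof.
  split; [exists (cst 0); exact I|split; [intros; exact I|split]];
    intros a _; [exists (cst (a 0%nat + 1))|exists (cst (a 0%nat - 1))];
    split; auto; apply lex_head; unfold cst; lia.
Qed.

Lemma open_interval_neg I : open_interval I -> open_interval (fun u => I (neg u)).
Proof.
  intros [[z Hz] [Hconvex [Hmax Hmin]]]. split; [|split; [|split]].
  - exists (neg z); rewrite neg_neg; exact Hz.
  - intros a b c Ha Hc Hab Hbc.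
    apply (Hconvex (neg c) (neg b) (neg a) Hc Ha); apply lex_neg; assumption.
  - intros a Ha. destruct (Hmin _ Ha) as [b [Hb Hba]]. exists (neg b).
    rewrite neg_neg; split; [exact Hb|].
    apply lex_neg; rewrite neg_neg; exact Hba.
  - intros a Ha. destruct (Hmax _ Ha) as [b [Hb Hab]]. exists (neg b).
    rewrite neg_neg; split; [exact Hb|].
    apply lex_neg; rewrite neg_neg; exact Hab.
Qed.

(** The part of an open interval above one of its points: an initial segment
    without maximum of the final segment [{u | z < u}]. *)
Lemma upper_half_iso I z :
  open_interval I -> I z -> tail_iso full (fun u => I u /\ lex_lt z u).
Proof.
  intros [_ [Hconvex [Hmax _]]] Hz.
  destruct (Hmax z Hz) as [b [Hb Hzb]].
  apply (initial_segment_iso_in (lex_lt z)).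
  - apply final_segment_iso; [exists b; exact Hzb|eauto using lex_trans|].
    intros x Hzx. destruct (lex_dense _ _ Hzx) as [c [Hzc Hcx]]; eauto.
  - intros y [_ Hzy]; exact Hzy.
  - intros x y [Hy _] Hzx Hxy; split; [exact (Hconvex z x y Hz Hy Hzx Hxy)|exact Hzx].
  - exists b; split; assumption.
  - intros x [Hx Hzx]. destruct (Hmax x Hx) as [y [Hy Hxy]].
    exists y; split; [split; [exact Hy|eapply lex_trans; eauto]|exact Hxy].
Qed.

Lemma lower_half_iso I z :
  open_interval I -> I z -> tail_iso full (fun u => I u /\ lex_lt u z).
Proof.
  intros HI Hz.
  assert (Hz' : I (neg (neg z))) by (rewrite neg_neg; exact Hz).
  assert (Hmirror := upper_half_iso _ (neg z) (open_interval_neg I HI) Hz').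
  eapply tail_iso_ext; [| |exact (tail_iso_neg _ _ Hmirror)]; [tauto|].
  intros u; cbv beta; rewrite neg_neg, lex_neg; tauto.
Qed.

(** Cutting at a point [z], both [Z^omega] and [I] split into a lower half, the
    point, and an upper half; the halves correspond pairwise. *)
Lemma interval_iso I : open_interval I -> tail_iso full I.
Proof.
  intros HI. pose proof HI as [[z Hz] _].
  assert (Hlower : tail_iso (fun u => lex_lt u z) (fun u => I u /\ lex_lt u z)).
  { eapply tail_iso_trans; [apply tail_iso_sym|apply lower_half_iso; auto].
    eapply tail_iso_ext; [| |apply (lower_half_iso full z open_interval_full Logic.I)];
      tauto. }
  assert (Hupper : tail_iso (fun u => lex_lt z u) (fun u => I u /\ lex_lt z u)).
  { eapply tail_iso_trans; [apply tail_iso_sym|apply upper_half_iso; auto].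
    eapply tail_iso_ext; [| |apply (upper_half_iso full z open_interval_full Logic.I)];
      tauto. }
  apply (tail_iso_ext (fun u => lex_lt u z \/ (u = z \/ lex_lt z u)) _
           (fun u => (I u /\ lex_lt u z) \/ (u = z \/ (I u /\ lex_lt z u)))).
  - intros u; split; [tauto|intros _].
    destruct (lex_total u z) as [->|[H|H]]; tauto.
  - intros u; split; [intros [[Hu _]|[->|[Hu _]]]; auto|intros Hu].
    destruct (lex_total u z) as [->|[H|H]]; tauto.
  - apply tail_iso_union; [| |exact Hlower|apply tail_iso_union; auto using tail_iso_refl].
    + intros x y Hxz [->|Hzy]; eauto using lex_trans.
    + intros x y [_ Hxz] [->|[_ Hzy]]; eauto using lex_trans.
    + intros x y -> Hzy; exact Hzy.
    + intros x y -> [_ Hzy]; exact Hzy.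
Qed.

Lemma order_iso_of_tail_iso X B :
  tail_closed X -> tail_iso full B -> order_iso X (fun u => X u /\ B u).
Proof.
  intros HX [f Hf]. exists f; split; [|split].
  - intros x Hx; split; [|apply (maps_into Hf x I)].
    apply (HX x); [apply shift_equiv_tail_equiv, (keeps_tail Hf x I)|exact Hx].
  - intros y [Xy By]. destruct (maps_onto Hf y By) as [x [_ <-]]. exists x; split; auto.
    apply (HX (f x)); [|exact Xy].
    apply shift_equiv_tail_equiv, shift_equiv_sym, (keeps_tail Hf x I).
  - intros x y _ _; apply (keeps_order Hf x y I I).
Qed.

Theorem mainTheorem8 (X : Zomega -> Prop) :
  tail_closed X ->
  (forall I : Zomega -> Prop, open_interval I ->
     order_iso X (fun u => X u /\ I u)) /\
  (forall r : list Z, r <> nil ->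
     order_iso X (fun u => X u /\ cone r u)).
Proof.
  intros HX; split.
  - intros I HI. apply order_iso_of_tail_iso, interval_iso; assumption.
  - intros r _. apply order_iso_of_tail_iso; [assumption|apply cone_iso].
Qed.
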